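(* Let $(\Omega,\mathcal{F})$ be a measurable space and $\mathcal{P}=\{P_1,\dots,P_K\}$ ($K\ge2$) a finite set of probability measures on it, with $\hat{\mathbb{E}}[Z]=\max_{1\le i\le K}E_{P_i}[Z]$. Let $X,Y$ be random variables with $\hat{\mathbb{E}}[X^2]+\hat{\mathbb{E}}[Y^2]<\infty$. Then $$\overline{C}(X,Y)=\max_{1\le i<j\le K}\overline{C}_{ij}(X,Y),$$ where $\overline{C}_{ij}(X,Y)$ denotes the upper covariance of $X$ and $Y$ under the two-element set $\{P_i,P_j\}$.
   Context: For a set $\mathcal{Q}$ of probability measures with $\hat{\mathbb{E}}_{\mathcal{Q}}[Z]=\sup_{P\in\mathcal{Q}}E_P[Z]$ and a random variable $W$ with $\hat{\mathbb{E}}_{\mathcal{Q}}[W^2]<\infty$: $\overline{\mu}_W=\hat{\mathbb{E}}_{\mathcal{Q}}[W]$, $\underline{\mu}_W=-\hat{\mathbb{E}}_{\mathcal{Q}}[-W]$, $M_W=[\underline{\mu}_W,\overline{\mu}_W]$, and the upper covariance under $\mathcal{Q}$ is $\max_{\mu_2\in M_Y}\min_{\mu_1\in M_X}\hat{\mathbb{E}}_{\mathcal{Q}}[(X-\mu_1)(Y-\mu_2)]$. $\overline{C}(X,Y)$ is this quantity for $\mathcal{Q}=\mathcal{P}$ and $\overline{C}_{ij}(X,Y)$ for $\mathcal{Q}=\{P_i,P_j\}$. *)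

From HB Require Import structures.
From mathcomp Require Import all_boot all_order all_algebra.
From mathcomp Require Import all_classical all_reals all_analysis.
Set Implicit Arguments. Unset Strict Implicit. Unset Printing Implicit Defensive.
Import Order.TTheory GRing.Theory Num.Theory.
Local Open Scope classical_set_scope.
Local Open Scope ring_scope.

Definition Eup d (T : measurableType d) (R : realType) (K : nat)
  (P : 'I_K -> probability T R) (S : {set 'I_K}) (Z : T -> R) : \bar R :=
  (\big[maxe/-oo]_(i in S) \int[P i]_w (Z w)%:E)%E.

Definition mu_up d (T : measurableType d) (R : realType) (K : nat)
  (P : 'I_K -> probability T R) (S : {set 'I_K}) (W : T -> R) : \bar R :=
  Eup P S W.
Definition mu_low d (T : measurableType d) (R : realType) (K : nat)
  (P : 'I_K -> probability T R) (S : {set 'I_K}) (W : T -> R) : \bar R :=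
  (- Eup P S (fun w => (- W w)%R))%E.
Definition Mint d (T : measurableType d) (R : realType) (K : nat)
  (P : 'I_K -> probability T R) (S : {set 'I_K}) (W : T -> R) : set R :=
  [set m : R | (mu_low P S W <= m%:E)%E /\ (m%:E <= mu_up P S W)%E].

(* upper covariance: max_{mu2 in M_Y} min_{mu1 in M_X} Eup[(X-mu1)(Y-mu2)]
   (max/min rendered as sup/inf; they are attained). *)
Definition ucov d (T : measurableType d) (R : realType) (K : nat)
  (P : 'I_K -> probability T R) (S : {set 'I_K}) (X Y : T -> R) : \bar R :=
  ereal_sup ((fun m2 : R =>
     ereal_inf ((fun m1 : R => Eup P S (fun w => (X w - m1) * (Y w - m2)))
                   @` Mint P S X)) @` Mint P S Y).

From HB Require Import structures.
From mathcomp Require Import all_boot all_order all_algebra.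
From mathcomp Require Import all_classical all_reals all_analysis.
From mathcomp Require Import ring lra.
Set Implicit Arguments. Unset Strict Implicit. Unset Printing Implicit Defensive.
Import Order.TTheory GRing.Theory Num.Theory.
Local Open Scope classical_set_scope.
Local Open Scope ring_scope.

(* Writing a_k, b_k, c_k for the P_k-means of X, Y and XY, everything reduces
   to these K triples, since E_k[(X - x)(Y - y)] is a polynomial in them.
   Every mixture t P_i + (1 - t) P_j of two measures of the family has
   covariance at most the upper covariance: centre Y at its mixture mean, and
   then for any x the larger of the two cross moments dominates their convex
   combination, which is the mixture covariance.  Conversely, if all these
   mixture covariances are at most m, then for each y the constraints
   E_k[(X - x)(Y - y)] <= m are half-lines in x, and two of them pointing
   towards each other overlap, because the mixture of the two measures that
   centres Y at y has covariance at most m; a common x can moreover be chosen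
   in [min a, max a].  So the upper covariance of a family is the supremum of
   the covariances of mixtures of two of its members, and for the whole family
   this is the largest of the suprema attached to its pairs. *)

Section moment_vectors.
Variables (R : realType) (K : nat).
Implicit Types (S : {set 'I_K}) (a b c : 'I_K -> R) (i j k : 'I_K) (t x y : R).

Definition mean_interval S a : set R :=
  [set m | (exists2 i, i \in S & a i <= m) /\ (exists2 j, j \in S & m <= a j)].

(* [a], [b], [c] stand for the means of X, Y and XY under P_1, ..., P_K, and
   [cross_moment a b c x y k] for E_k[(X - x)(Y - y)]. *)
Definition cross_moment a b c x y k : R := c k - x * b k - y * a k + x * y.

Definition max_cross_moment S a b c x y : \bar R :=
  (\big[maxe/-oo]_(k in S) (cross_moment a b c x y k)%:E)%E.

Definition moment_ucov S a b c : \bar R :=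
  ereal_sup ((fun y => ereal_inf ((fun x => max_cross_moment S a b c x y)
                                    @` mean_interval S a)) @` mean_interval S b).

Definition mixture_cov a b c i j t : R :=
  t * c i + (1 - t) * c j - (t * a i + (1 - t) * a j) * (t * b i + (1 - t) * b j).

Lemma cross_moment_mixture a b c i j t x y :
  t * cross_moment a b c x y i + (1 - t) * cross_moment a b c x y j =
  mixture_cov a b c i j t +
  (x - (t * a i + (1 - t) * a j)) * (y - (t * b i + (1 - t) * b j)).
Proof. by rewrite /cross_moment /mixture_cov; ring. Qed.

Lemma mixture_covC a b c i j t :
  mixture_cov a b c i j t = mixture_cov a b c j i (1 - t).
Proof. by rewrite /mixture_cov; ring. Qed.

Lemma mixture_cov1 a b c i j : mixture_cov a b c i j 1 = c i - a i * b i.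
Proof. by rewrite /mixture_cov; ring. Qed.

Lemma mixture_cov_id a b c i t : mixture_cov a b c i i t = c i - a i * b i.
Proof. by rewrite /mixture_cov; ring. Qed.

Lemma mean_interval_mixture S a i j t : i \in S -> j \in S -> 0 <= t <= 1 ->
  mean_interval S a (t * a i + (1 - t) * a j).
Proof.
move=> iS jS /andP[t_ge0 t_le1].
have [le_ij|le_ji] := leP (a i) (a j).
  by split; [exists i|exists j]; rewrite //; nra.
by split; [exists j|exists i]; rewrite //; nra.
Qed.

Lemma mixture_cov_le_moment_ucov S a b c i j t :
  i \in S -> j \in S -> 0 <= t <= 1 ->
  ((mixture_cov a b c i j t)%:E <= moment_ucov S a b c)%E.
Proof.
move=> iS jS t01; have /andP[t_ge0 t_le1] := t01.
set y := t * b i + (1 - t) * b j.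
apply: le_trans (ereal_sup_ubound _); last first.
  by exists y => //; exact: mean_interval_mixture.
apply: le_ereal_inf_tmp => _ [x _ <-].
have := cross_moment_mixture a b c i j t x y; rewrite subrr mulr0 addr0 => mixE.
apply/bigmax_geP; right.
have [le_ij|le_ji] := leP (cross_moment a b c x y i) (cross_moment a b c x y j).
  by exists j; rewrite // lee_fin -mixE; nra.
by exists i; rewrite // lee_fin -mixE; nra.
Qed.

Section upper_bound.
Variables (S : {set 'I_K}) (a b c : 'I_K -> R) (m : R).
Hypothesis mixture_cov_le : forall i j t, i \in S -> j \in S -> 0 <= t <= 1 ->
  mixture_cov a b c i j t <= m.

Lemma moment_cov_le k : k \in S -> c k - a k * b k <= m.
Proof.
by move=> kS; rewrite -(mixture_cov1 a b c k k) mixture_cov_le // ler01 lexx.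
Qed.

Definition cross_root y k := a k + (m - (c k - a k * b k)) / (y - b k).

Lemma cross_moment_sub_root x y k : y != b k ->
  cross_moment a b c x y k - m = (y - b k) * (x - cross_root y k).
Proof.
by move=> ybk; rewrite /cross_moment /cross_root; field; rewrite subr_eq0.
Qed.

(* The mixture of P_k and P_j that centres Y at y has covariance at most m. *)
Lemma cross_moment_le_pair x y k j : k \in S -> j \in S -> b k <= y < b j ->
  m <= cross_moment a b c x y j -> cross_moment a b c x y k <= m.
Proof.
move=> kS jS /andP[bk_le_y y_lt_bj] m_le_j.
have bjk_gt0 : 0 < b j - b k by rewrite subr_gt0 (le_lt_trans bk_le_y).
pose t := (b j - y) / (b j - b k).
have t_gt0 : 0 < t by rewrite divr_gt0 // subr_gt0.
have t_le1 : t <= 1 by rewrite ler_pdivrMr // mul1r lerD2l lerN2.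
have mixb : t * b k + (1 - t) * b j = y by rewrite /t; field; rewrite gt_eqF.
have := cross_moment_mixture a b c k j t x y; rewrite mixb subrr mulr0 addr0.
have := mixture_cov_le kS jS (t:=t); rewrite (ltW t_gt0) t_le1 => /(_ isT).
nra.
Qed.

Lemma exists_cross_moment_le i0 y : i0 \in S ->
  exists2 x, mean_interval S a x &
    forall k, k \in S -> cross_moment a b c x y k <= m.
Proof.
move=> i0S.
have [imin iminS iminP] : exists2 i, i \in S & forall k, k \in S -> a i <= a k.
  by case: (arg_minP a i0S) => i iS Hi; exists i.
(* the least point meeting the constraints of the k with y < b k,
   but at least min a *)
pose x := \big[Num.max/a imin]_(j | (j \in S) && (y < b j)) cross_root y j.
have root_le_x j : j \in S -> y < b j -> cross_root y j <= x.
  by move=> jS ybj; apply: le_bigmax_cond; rewrite jS ybj.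
have x_cases :
    x <= a imin \/ exists2 j, (j \in S) && (y < b j) & x <= cross_root y j.
  exact/bigmax_geP.
have root_le_a j : j \in S -> y < b j -> cross_root y j <= a j.
  move=> jS ybj; have := @cross_moment_sub_root (a j) y j (negbT (lt_eqF ybj)).
  have -> : cross_moment a b c (a j) y j = c j - a j * b j.
    by rewrite /cross_moment; ring.
  have := moment_cov_le jS; nra.
exists x.
  split; first by exists imin => //; exact: bigmax_ge_id.
  case: x_cases => [x_le|[j /andP[jS ybj] x_le]]; first by exists imin.
  by exists j => //; apply: le_trans x_le (root_le_a j jS ybj).
move=> k kS; have [ybk|bky] := ltP y (b k).
  have := @cross_moment_sub_root x y k (negbT (lt_eqF ybk)).
  have := root_le_x k kS ybk; nra.
case: x_cases => [x_le|[j /andP[jS ybj] x_le]].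
  have -> : cross_moment a b c x y k = c k - a k * b k + (y - b k) * (x - a k).
    by rewrite /cross_moment; ring.
  have := moment_cov_le kS; have := iminP k kS; nra.
apply: (@cross_moment_le_pair x y k j kS jS); first by rewrite bky.
have := @cross_moment_sub_root x y j (negbT (lt_eqF ybj)); nra.
Qed.

Lemma moment_ucov_le_EFin i0 : i0 \in S ->
  (moment_ucov S a b c <= m%:E)%E.
Proof.
move=> i0S; apply: ge_ereal_sup => _ [y _ <-].
have [x xI x_le] := exists_cross_moment_le y i0S.
apply: ge_ereal_inf; exists (max_cross_moment S a b c x y); first by exists x.
by apply: bigmax_le => [|k kS]; [exact: leNye|rewrite lee_fin x_le].
Qed.

End upper_bound.

Lemma moment_ucov_le S a b c (M : \bar R) i0 : i0 \in S ->
  (forall i j t, i \in S -> j \in S -> 0 <= t <= 1 ->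
     ((mixture_cov a b c i j t)%:E <= M)%E) ->
  (moment_ucov S a b c <= M)%E.
Proof.
case: M => [m| |] i0S mixture_le; last 2 first.
- exact: leey.
- by have := mixture_le i0 i0 1 i0S i0S; rewrite ler01 lexx leeNy_eq => /(_ isT).
apply: (moment_ucov_le_EFin _ i0S) => i j t iS jS t01.
by rewrite -lee_fin mixture_le.
Qed.

Lemma mixture_cov_ordered a b c i j t : (1 < K)%N -> 0 <= t <= 1 ->
  exists i' j' t', [/\ (i' < j')%N, 0 <= t' <= 1 &
    mixture_cov a b c i j t = mixture_cov a b c i' j' t'].
Proof.
move=> K_gt1 /andP[t_ge0 t_le1].
have [ij|ji|ij] := ltngtP i j.
- by exists i, j, t; split; rewrite ?t_ge0.
- exists j, i, (1 - t); rewrite mixture_covC.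
  by split => //; apply/andP; split; lra.
have -> : j = i by apply: val_inj.
rewrite mixture_cov_id; have [i0|i_gt0] := posnP i.
- by exists i, (Ordinal K_gt1), 1; rewrite i0 mixture_cov1 ler01 lexx.
- exists (Ordinal (ltnW K_gt1)), i, 0.
  by rewrite mixture_covC subr0 mixture_cov1 lexx ler01.
Qed.

Theorem moment_ucov_pairs a b c : (1 < K)%N ->
  moment_ucov [set: 'I_K] a b c =
  (\big[maxe/-oo]_(i : 'I_K) \big[maxe/-oo]_(j : 'I_K | (i < j)%N)
      moment_ucov [set i; j] a b c)%E.
Proof.
move=> K_gt1; apply/le_anti/andP; split.
  apply: (@moment_ucov_le _ _ _ _ _ (Ordinal (ltnW K_gt1))) => [|i j t _ _ t01].
    by rewrite inE.
  have [i' [j' [t' [ij' t01' ->]]]] := mixture_cov_ordered a b c i j K_gt1 t01.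
  apply: (bigmax_sup i') => //; apply: (bigmax_sup j') => //.
  by apply: mixture_cov_le_moment_ucov; rewrite // !inE eqxx ?orbT.
apply: bigmax_le => [|i _]; first exact: leNye.
apply: bigmax_le => [|j _]; first exact: leNye.
apply: (@moment_ucov_le _ _ _ _ _ i) => [|i' j' t _ _ t01].
  by rewrite !inE eqxx.
by apply: mixture_cov_le_moment_ucov; rewrite ?inE.
Qed.

End moment_vectors.

Lemma EFin_le_bigmaxeP (R : realType) (I : finType) (A : pred I) (F : I -> R) x :
  (x%:E <= \big[maxe/-oo]_(i | A i) (F i)%:E)%E <-> exists2 i, A i & x <= F i.
Proof.
split => [/bigmax_geP[//|[i Ai]]|[i Ai le_xF]]; first by exists i.
by apply: (bigmax_sup i).
Qed.

Lemma Lfun2_of_sqr_integral_lty d (T : measurableType d) (R : realType)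
    (mu : {measure set T -> \bar R}) (f : T -> R) :
  measurable_fun setT f -> (\int[mu]_x (f x ^+ 2)%:E < +oo)%E ->
  f \in Lfun mu 2%:E.
Proof.
move=> mf sqf; rewrite inE; apply/andP; split; rewrite inE//=.
rewrite /finite_norm unlock poweR_lty//.
by under eq_integral => x _ do rewrite (_ : (EFin \o f) x = (f x)%:E)//
  abse_EFin poweR_EFin powR_mulrn// (real_normK (num_real _)).
Qed.

Section expectation_moments.
Context d (T : measurableType d) (R : realType) (P : probability T R).
Local Open Scope ereal_scope.

Lemma Lfun2_Lfun1 (X : T -> R) : X \in Lfun P 2%:E -> X \in Lfun P 1.
Proof. by apply: Lfun_subset12; exact: fin_num_measure. Qed.

Lemma expectationN (X : T -> R) :
  X \in Lfun P 1 -> 'E_P[fun w => - X w]%R = - 'E_P[X].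
Proof.
move=> X1; rewrite (_ : (fun w => - X w)%R = (-1) \o* X); last first.
  by apply/funext => w /=; rewrite mulrN1.
by rewrite expectationZl // EFinN mulN1e.
Qed.

Lemma expectation_shifted_mul (X Y : T -> R) (x y : R) :
  X \in Lfun P 2%:E -> Y \in Lfun P 2%:E ->
  'E_P[fun w => (X w - x) * (Y w - y)]%R =
  'E_P[X * Y] - y%:E * 'E_P[X] - x%:E * 'E_P[Y] + (x * y)%:E.
Proof.
move=> X2 Y2; have X1 := Lfun2_Lfun1 X2; have Y1 := Lfun2_Lfun1 Y2.
have XY1 := Lfun2_mul_Lfun1 X2 Y2.
rewrite [X in 'E_P[X]]
  (_ : _ = X \* Y \- y \o* X \- x \o* Y \+ cst (x * y))%R; last first.
  by apply/funext => w /=; ring.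
rewrite expectationD ?rpredB ?Lfun_scale ?Lfun_cst //.
rewrite 2?expectationB ?rpredB ?Lfun_scale //.
by rewrite 2?expectationZl // expectation_cst.
Qed.

End expectation_moments.

Section moment_reduction.
Context d (T : measurableType d) (R : realType) (K : nat).
Variable P : 'I_K -> probability T R.

Definition means (W : T -> R) i : R := fine 'E_(P i)[W].

Lemma EupE S (W : T -> R) :
  Eup P S W = (\big[maxe/-oo]_(i in S) 'E_(P i)[W])%E.
Proof. by apply: eq_bigr => i _; rewrite unlock. Qed.

Lemma expectation_means (W : T -> R) i :
  W \in Lfun (P i) 1 -> ('E_(P i)[W] = (means W i)%:E)%E.
Proof. by move=> W1; rewrite fineK ?expectation_fin_num. Qed.

Lemma Eup_means S (W : T -> R) : (forall i, W \in Lfun (P i) 1) ->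
  Eup P S W = (\big[maxe/-oo]_(i in S) (means W i)%:E)%E.
Proof.
by move=> W1; rewrite EupE; apply: eq_bigr => i _; rewrite expectation_means.
Qed.

Lemma Mint_mean_interval S (W : T -> R) : (forall i, W \in Lfun (P i) 1) ->
  Mint P S W = mean_interval S (means W).
Proof.
move=> W1; have NW1 i : (fun w => - W w) \in Lfun (P i) 1.
  exact: (Lfun_oppr_closed (W1 i)).
rewrite /Mint /mu_up /mu_low !Eup_means //.
under eq_bigr => i _ do rewrite /means expectationN // fineN -/(means W i).
apply/seteqP; split => m /= [lo hi]; split; try by apply/EFin_le_bigmaxeP.
- move: lo; rewrite leeNl -EFinN => /EFin_le_bigmaxeP[i iS le_i].
  by exists i => //; rewrite -lerN2.
- rewrite leeNl -EFinN; apply/EFin_le_bigmaxeP.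
  by case: lo => i iS le_i; exists i; rewrite // lerN2.
Qed.

Variables X Y : T -> R.
Hypotheses (X2 : forall i, X \in Lfun (P i) 2%:E)
  (Y2 : forall i, Y \in Lfun (P i) 2%:E).

Lemma Eup_shifted_mul S x y :
  Eup P S (fun w => (X w - x) * (Y w - y)) =
  max_cross_moment S (means X) (means Y) (means (X * Y)) x y.
Proof.
rewrite EupE; apply: eq_bigr => i _.
have XY1 : (X * Y)%R \in Lfun (P i) 1 by exact: Lfun2_mul_Lfun1.
rewrite expectation_shifted_mul // !expectation_means ?XY1 ?Lfun2_Lfun1 //.
by rewrite -!EFinM -!EFinB -EFinD /cross_moment; congr EFin; ring.
Qed.

Lemma ucov_moments S :
  ucov P S X Y = moment_ucov S (means X) (means Y) (means (X * Y)).
Proof.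
rewrite /ucov !Mint_mean_interval => [|i|i]; last 2 first.
- exact: Lfun2_Lfun1.
- exact: Lfun2_Lfun1.
congr ereal_sup; congr image; apply/funext => y.
by congr ereal_inf; congr image; apply/funext => x; exact: Eup_shifted_mul.
Qed.

End moment_reduction.

Lemma Lfun2_of_Eup_sqr_lty d (T : measurableType d) (R : realType) (K : nat)
    (P : 'I_K -> probability T R) (W : T -> R) :
  measurable_fun setT W -> (Eup P [set: 'I_K] (fun w => (W w ^+ 2)%R) < +oo)%E ->
  forall i, W \in Lfun (P i) 2%:E.
Proof.
move=> mW W2 i; apply: Lfun2_of_sqr_integral_lty => //; apply: le_lt_trans W2.
by apply: (bigmax_sup i); rewrite ?inE.
Qed.

Unset Implicit Arguments.

Theorem proposition4p2 (d : measure_display) (T : measurableType d)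
  (R : realType) (K : nat) (P : 'I_K -> probability T R) (X Y : T -> R) :
  (1 < K)%N -> injective P ->
  measurable_fun setT X -> measurable_fun setT Y ->
  (Eup P [set: 'I_K] (fun w => (X w ^+ 2)%R) + Eup P [set: 'I_K] (fun w => (Y w ^+ 2)%R)
     < +oo)%E ->
  ucov P [set: 'I_K] X Y =
  (\big[maxe/-oo]_(i : 'I_K) \big[maxe/-oo]_(j : 'I_K | (i < j)%N)
      ucov P [set i; j] X Y)%E.
Proof.
(* the argument never uses that the P_i are distinct *)
move=> K_gt1 _ mX mY sq_fin.
have sq_ge0 W : (0 <= Eup P [set: 'I_K] (fun w => (W w ^+ 2)%R))%E.
  apply: (bigmax_sup (Ordinal (ltnW K_gt1))); rewrite ?inE //.
  by apply: integral_ge0 => w _; rewrite lee_fin sqr_ge0.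
have X2 := Lfun2_of_Eup_sqr_lty mX (le_lt_trans (leeDl _ (sq_ge0 Y)) sq_fin).
have Y2 := Lfun2_of_Eup_sqr_lty mY (le_lt_trans (leeDr _ (sq_ge0 X)) sq_fin).
rewrite ucov_moments // moment_ucov_pairs //.
by apply: eq_bigr => i _; apply: eq_bigr => j _; rewrite ucov_moments.
Qed.
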